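(* Let $\varphi:\mathbb{R}^n\to\mathbb{R}$ be twice continuously differentiable and convex. Then $\det(\nabla^2\varphi(x))=0$ for all $x\in\mathbb{R}^n$ if and only if there exist $v\in\mathbb{R}^n\setminus\{0\}$ and $c\in\mathbb{R}$ such that $\langle v,\nabla\varphi(x)\rangle=c$ for all $x\in\mathbb{R}^n$. *)

(* R^n is modelled as row vectors 'rV[R]_n. *)
From HB Require Import structures.
From mathcomp Require Import all_boot all_order all_algebra.
From mathcomp Require Import all_classical all_reals all_analysis.
Set Implicit Arguments. Unset Strict Implicit. Unset Printing Implicit Defensive.
Import Order.TTheory GRing.Theory Num.Theory.
Import numFieldNormedType.Exports.
Local Open Scope ring_scope.

Definition e_ {R : realType} {n : nat} (i : 'I_n) : 'rV[R]_n := delta_mx 0 i.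

Definition partial {R : realType} {n : nat} (f : 'rV[R]_n -> R) (i : 'I_n)
  : 'rV[R]_n -> R := fun x => derive f x (e_ i).

Definition grad {R : realType} {n : nat} (f : 'rV[R]_n -> R) (x : 'rV[R]_n)
  : 'rV[R]_n := \row_i partial f i x.

Definition hessian {R : realType} {n : nat} (f : 'rV[R]_n -> R) (x : 'rV[R]_n)
  : 'M[R]_n := \matrix_(i, j) partial (partial f i) j x.

Definition C2 {R : realType} {n : nat} (f : 'rV[R]_n -> R) : Prop :=
  (forall x, differentiable f x) /\
  (forall i x, differentiable (partial f i) x) /\
  (forall i j, continuous (partial (partial f i) j)).

Definition convex_fun {R : realType} {n : nat} (f : 'rV[R]_n -> R) : Prop :=
  forall (x y : 'rV[R]_n) (t : R), 0 <= t -> t <= 1 ->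
    f ((1 - t) *: x + t *: y) <= (1 - t) * f x + t * f y.

Definition inner {R : realType} {n : nat} (u v : 'rV[R]_n) : R :=
  \sum_(i < n) u 0 i * v 0 i.

(** If [<v, grad phi>] is constant, differentiating it puts [v] in the kernel
    of every Hessian.  Conversely, if the gradients of [phi] lie in no affine
    hyperplane, finitely many differences [grad phi (p_i) - grad phi 0] span
    [R^n].  The supporting hyperplanes of the convex function [phi] at [0] and
    at the [p_i] then show that [phi] minus a suitable linear function grows at
    least linearly.  So, for small [eps > 0], subtracting moreover [eps |x|^2]
    leaves a function whose minimum over a large ball is attained in the
    interior, and at that minimum the Hessian quadratic form of [phi] is at
    least [eps |w|^2]: the Hessian is nonsingular there. *)
From HB Require Import structures.
From mathcomp Require Import all_boot all_order all_algebra.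
From mathcomp Require Import all_classical all_reals all_analysis.
From mathcomp Require Import ring lra.
Set Implicit Arguments. Unset Strict Implicit. Unset Printing Implicit Defensive.
Import Order.TTheory GRing.Theory Num.Theory.
Import numFieldNormedType.Exports.
Local Open Scope ring_scope.
Local Open Scope classical_set_scope.

Lemma ler_sum_term (R : numDomainType) (I : finType) (F : I -> R) i :
  (forall j, 0 <= F j) -> F i <= \sum_j F j.
Proof. by move=> F_ge0; rewrite (bigD1 i) //= lerDl sumr_ge0. Qed.

Lemma abs_le_card_max_of_sum0 (R : realDomainType) (I : finType) (i0 : I) (c : I -> R) :
  \sum_i c i = 0 -> exists m, forall i, `|c i| <= #|I|%:R * c m.
Proof.
move=> c_sum0; case: (arg_maxP c (erefl (predT i0))) => m _ max_m; exists m => i.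
have card_ge1 : 1 <= #|I|%:R :> R by rewrite ler1n; apply/card_gt0P; exists i0.
have sum_cm : \sum_(j : I) c m = #|I|%:R * c m by rewrite sumr_const mulr_natl.
have cm_ge0 : 0 <= c m.
  suff : 0 <= #|I|%:R * c m by rewrite pmulr_rge0 // (lt_le_trans ltr01).
  by rewrite -sum_cm -[leLHS]c_sum0; apply: ler_sum => j _; exact: max_m.
have ci_le : c i <= c m := max_m i isT.
have ci_ge : - c i <= \sum_(j | j != i) c m.
  move: c_sum0; rewrite (bigD1 i) //= => /eqP; rewrite addrC addr_eq0 => /eqP <-.
  by apply: ler_sum => j _; exact: max_m.
rewrite (bigD1 i) //= in sum_cm; rewrite ler_norml; apply/andP; split; first lra.
have := ler_wpM2r cm_ge0 card_ge1; rewrite mul1r; lra.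
Qed.

Lemma continuous_sum (R : numFieldType) (I : Type) (r : seq I) (P : pred I)
    (T : topologicalType) (h : I -> T -> R) :
  (forall i, continuous (h i)) -> continuous (fun t => \sum_(i <- r | P i) h i t).
Proof.
move=> ch; have -> : (fun t => \sum_(i <- r | P i) h i t) = \sum_(i <- r | P i) h i.
  by apply/funext => t; rewrite fct_sumE.
elim/big_ind: _ => //; first by move=> t; exact: cst_continuous.
by move=> g1 g2 c1 c2 t; apply: continuousD; [exact: c1 | exact: c2].
Qed.

Section ValuesSpan.
Variables (F : fieldType) (T : Type) (n : nat) (g : T -> 'rV[F]_n).

Local Notation values_mx p := (\matrix_(i < _) g (p i)).

Lemma values_mx_extend k (p : 'I_k -> T) x :
  exists p' : 'I_k.+1 -> T,
    (values_mx p <= values_mx p')%MS /\ (g x <= values_mx p')%MS.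
Proof.
pose p' i := if unlift ord0 i is Some j then p j else x.
exists p'; split.
  apply/row_subP => i; have := row_sub (lift ord0 i) (values_mx p').
  by rewrite !rowK /p' liftK.
by have := row_sub ord0 (values_mx p'); rewrite rowK /p' unlift_none.
Qed.

Lemma exists_values_span : exists k (p : 'I_k -> T), forall x, (g x <= values_mx p)%MS.
Proof.
pose P (m : nat) := `[< exists k (p : 'I_k -> T), \rank (values_mx p) = m >].
have P0 : P 0%N.
  apply/asboolP; exists 0%N, (fun i : 'I_0 => False_rect T (notF (ltn_ord i))).
  by rewrite flatmx0 mxrank0.
have rank_le m : P m -> (m <= n)%N by move=> /asboolP [k [p <-]]; exact: rank_leq_col.
have [_ /asboolP [k [p <-]] maxp] := ex_maxnP (ex_intro P _ P0) rank_le.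
exists k, p => x; have [p' [sub_p' x_p']] := values_mx_extend p x.
apply: submx_trans x_p' _; rewrite -(mxrank_leqif_sup sub_p').
rewrite eqn_leq (mxrank_leqif_sup sub_p') /=.
by apply: maxp; apply/asboolP; exists k.+1, p'.
Qed.

Lemma values_orthogonal_or_full :
  (exists2 v : 'rV_n, v != 0 & forall x, g x *m v^T = 0) \/
  (exists k (p : 'I_k -> T), row_full (values_mx p)).
Proof.
have [k [p span_p]] := exists_values_span.
have [full|not_full] := boolP (row_full (values_mx p)); [by right; exists k, p | left].
have : kermx (values_mx p)^T != 0 by rewrite kermx_eq0 /row_free mxrank_tr.
case/rowV0Pn => v /sub_kermxP v_ker v0; exists v => // x.
have [u ->] := submxP (span_p x).
by rewrite -mulmxA -[_ *m v^T]trmxK trmx_mul trmxK v_ker trmx0 mulmx0.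
Qed.

End ValuesSpan.

Section SecondDifference.
Variables (R : realType) (k D D2 : R -> R).
Hypotheses (dk : forall t, is_derive t (1 : R) k (D t))
           (dD : forall t, is_derive t (1 : R) D (D2 t)).

Lemma second_difference_MVT t : 0 < t ->
  exists th d, [/\ `|th| < t, 0 < d < 2 * t &
                   k t + k (- t) - 2 * k 0 = t * d * D2 th].
Proof.
move=> t_gt0.
have cont (f df : R -> R) a b : (forall t, is_derive t (1 : R) f (df t)) ->
    {within `[a, b], continuous f}.
  by move=> df_f; apply: derivable_within_continuous => x _; exact: ex_derive.
have [xi] := MVT t_gt0 (fun x _ => dk x) (cont _ _ 0 _ dk).
rewrite in_itv /= => /andP[xi_gt0 xi_lt] k_xi.
have mt_lt0 : - t < 0 by rewrite oppr_lt0.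
have [ze] := MVT mt_lt0 (fun x _ => dk x) (cont _ _ _ 0 dk).
rewrite in_itv /= => /andP[ze_gt ze_lt0] k_ze.
have ze_lt_xi : ze < xi by apply: lt_trans ze_lt0 xi_gt0.
have [th] := MVT ze_lt_xi (fun x _ => dD x) (cont _ _ ze xi dD).
rewrite in_itv /= => /andP[th_gt th_lt] D_th.
exists th, (xi - ze); split; first by rewrite ltr_norml; apply/andP; split; lra.
  by apply/andP; split; lra.
by rewrite -mulrA [(xi - ze) * _]mulrC -D_th; lra.
Qed.

Lemma le_derive2_of_second_difference c : 0 < c -> {for 0, continuous D2} ->
  (\forall t \near 0, 2 * c * t ^+ 2 <= k t + k (- t) - 2 * k 0) -> c <= D2 0.
Proof.
move=> c_gt0 cD2 near_k; rewrite leNgt; apply/negP => D2_lt.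
have : \forall s \near 0, D2 s < c /\ 2 * c * s ^+ 2 <= k s + k (- s) - 2 * k 0.
  by near=> s; split; [near: s; exact: (cvgr_lt (D2 0) cD2) | near: s].
move=> /nbhs_ballP [e /= e_gt0 near_e].
have in_e s : `|s| < e -> D2 s < c /\ 2 * c * s ^+ 2 <= k s + k (- s) - 2 * k 0.
  by move=> s_lt; apply: near_e; rewrite -ball_normE /= sub0r normrN.
have t_gt0 : 0 < e / 2 by rewrite divr_gt0.
have [_ k_bound] := in_e (e / 2) ltac:(by rewrite gtr0_norm //; lra).
have [th [d [th_lt /andP[d_gt0 d_lt] Delta]]] := second_difference_MVT t_gt0.
rewrite Delta in k_bound.
have [D2_th _] := in_e th ltac:(lra).
suff : e / 2 * d * D2 th < 2 * c * (e / 2) ^+ 2 by lra.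
have [D2_th_le0|D2_th_gt0] := lerP (D2 th) 0.
  apply: le_lt_trans (_ : 0 < _); last by rewrite !mulr_gt0 // exprn_gt0.
  by rewrite mulr_ge0_le0 // mulr_ge0 // ltW.
have : e / 2 * d * D2 th < e / 2 * d * c by rewrite ltr_pM2l // mulr_gt0.
have : e / 2 * d * c <= e / 2 * e * c by rewrite ler_pM2r // ler_pM2l //; lra.
rewrite expr2; lra.
Unshelve. all: by end_near.
Qed.

End SecondDifference.

Section RowCalculus.
Variables (R : realType) (n : nat).
Local Notation V := 'rV[R]_n.
Implicit Types (f : V -> R) (u v w x y : V).

Lemma innerBl u v w : inner (u - v) w = inner u w - inner v w.
Proof. by rewrite /inner -sumrB; apply: eq_bigr => i _; rewrite !mxE mulrBl. Qed.

Lemma innerBr u v w : inner u (v - w) = inner u v - inner u w.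
Proof. by rewrite /inner -sumrB; apply: eq_bigr => i _; rewrite !mxE mulrBr. Qed.

Lemma inner_sumr (I : Type) (r : seq I) (P : pred I) u (v : I -> V) :
  inner u (\sum_(i <- r | P i) v i) = \sum_(i <- r | P i) inner u (v i).
Proof.
rewrite /inner exchange_big /=; apply: eq_bigr => j _.
by rewrite summxE mulr_sumr.
Qed.

Lemma inner0r u : inner u 0 = 0.
Proof. by rewrite /inner big1 // => i _; rewrite mxE mulr0. Qed.

Lemma inner_mulmx_tr u v : (v *m u^T) 0 0 = inner u v.
Proof. by rewrite mxE; apply: eq_bigr => i _; rewrite mxE mulrC. Qed.

Lemma inner_self_gt0 w : w != 0 -> 0 < inner w w.
Proof.
case/rV0Pn => j wj0; rewrite /inner (bigD1 j) //=.
apply: ltr_pwDl; first by rewrite -expr2 exprn_even_gt0.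
by apply: sumr_ge0 => i _; rewrite -expr2 sqr_ge0.
Qed.

Lemma coord_le_norm y j : `|y 0 j| <= `|y|.
Proof.
rewrite [leRHS]/Num.norm /= mx_normrE; apply/bigmax_geP; right => /=.
by exists (0, j).
Qed.

Lemma norm_le_coord y c : 0 <= c -> (forall j, `|y 0 j| <= c) -> `|y| <= c.
Proof.
move=> c_ge0 yc; rewrite [leLHS]/Num.norm /= mx_normrE; apply/bigmax_leP.
by split=> // -[i j] _ /=; rewrite ord1.
Qed.

Lemma compact_norm_le r : compact [set y : V | `|y| <= r].
Proof.
apply: bounded_closed_compact.
  rewrite /= /bounded_near; near=> M => y /= y_le; apply: le_trans y_le _.
  by near: M; apply: nbhs_pinfty_ge; exact: num_real.
apply: (@preimage_closed _ _ (@Num.norm _ V) [set s | s <= r]); last exact: closed_le.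
by move=> y _; exact: norm_continuous.
Unshelve. all: by end_near.
Qed.

Lemma inner_self_le y : inner y y <= n%:R * `|y| ^+ 2.
Proof.
have -> : n%:R * `|y| ^+ 2 = \sum_(j < n) `|y| ^+ 2 by rewrite sumr_const card_ord mulr_natl.
apply: ler_sum => j _.
by have := coord_le_norm y j; rewrite ler_norml expr2; nra.
Qed.

Lemma continuous_inner_self : continuous (fun y => inner y y).
Proof. by apply: continuous_sum => j y; apply: continuousM; exact: coord_continuous. Qed.

Lemma continuous_innerl v : continuous (fun y => inner y v).
Proof.
apply: continuous_sum => j y.
by apply: continuousM; [exact: coord_continuous | exact: cst_continuous].
Qed.

Lemma derive_inner_grad f x w : differentiable f x -> 'D_w f x = inner w (grad f x).
Proof.
move=> df; rewrite deriveE // {1}(row_sum_delta w) linear_sum; apply: eq_bigr => j _.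
by rewrite linearZ /= -deriveE // mxE.
Qed.

Lemma is_derive_line f x w t : differentiable f (x + t *: w) ->
  is_derive t (1 : R) (fun s => f (x + s *: w)) ('D_w f (x + t *: w)).
Proof.
have shiftE : (fun h : R => h^-1 *: (f (x + (h *: 1 + t) *: w) - f (x + t *: w))) =
    (fun h : R => h^-1 *: (f (h *: w + (x + t *: w)) - f (x + t *: w))).
  by apply/funext => h; rewrite scalerDl [h *: 1]mulr1 addrCA addrA [x + _]addrC.
move=> /diff_derivable df; apply: DeriveDef.
  by rewrite /derivable /= shiftE; exact: df.
by rewrite /derive /= shiftE.
Qed.

Lemma inner_gradE f w : (fun y => inner w (grad f y)) = \sum_i w 0 i *: partial f i.
Proof. by apply/funext => y; rewrite fct_sumE; apply: eq_bigr => i _; rewrite mxE. Qed.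

Lemma differentiable_inner_grad f w x : (forall i, differentiable (partial f i) x) ->
  differentiable (fun y => inner w (grad f y)) x.
Proof.
by move=> df; rewrite inner_gradE; apply: differentiable_sum => i; exact: differentiableZ.
Qed.

Lemma grad_inner_grad f w x : (forall i, differentiable (partial f i) x) ->
  grad (fun y => inner w (grad f y)) x = w *m hessian f x.
Proof.
move=> df; apply/rowP => j; rewrite !mxE /partial inner_gradE.
rewrite derive_sum => [|i]; last exact/derivableZ/diff_derivable.
by apply: eq_bigr => i _; rewrite deriveZ ?mxE //; exact: diff_derivable.
Qed.

Lemma continuous_inner_hessian f u v : C2 f ->
  continuous (fun y => inner u (v *m hessian f y)).
Proof.
move=> [_ [_ cf]]; apply: continuous_sum => j y.
apply: continuousM; first exact: cst_continuous.
under [X in {for y, continuous X}]funext do rewrite mxE.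
apply: continuous_sum => i {}y; apply: continuousM; first exact: cst_continuous.
under [X in {for y, continuous X}]funext do rewrite mxE.
exact: cf.
Qed.

Lemma convex_fun_grad_le f a y : differentiable f a -> convex_fun f ->
  f a + inner (y - a) (grad f a) <= f y.
Proof.
move=> da cvx; rewrite -derive_inner_grad //; set v := y - a.
set q := fun h : R => h^-1 *: ((f \o shift a) (h *: v) - f a).
have q_cvg : q @ 0^' --> 'D_v f a.
  by have := diff_derivable (v := v) da; rewrite /derivable /derive -/q.
have q_cvg_right : q @ 0^'+ --> 'D_v f a.
  move=> A /q_cvg /nbhs_ballP [_ /posnumP[e] ball_A].
  by exists e%:num => //= z ze /gt_eqF/negbT/ball_A; exact.
rewrite addrC -lerBrDr; apply: (cvgr_to_le q_cvg_right); near=> h.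
have h_gt0 : 0 < h by near: h; exact: nbhs_right_gt.
have h_lt1 : h < 1 by near: h; exact: nbhs_right_lt.
rewrite /q /= -[_ *: _]/(h^-1 * _) ler_pdivrMl //.
have -> : h *: v + a = (1 - h) *: a + h *: y.
  by rewrite /v scalerBr scalerBl scale1r addrC -addrA [- _ + _]addrC.
have := cvx a y h (ltW h_gt0) (ltW h_lt1); lra.
Unshelve. all: by end_near.
Qed.

Lemma coord_left_inverse k (M : 'M[R]_(k, n)) (L : 'M[R]_(n, k)) y j :
  L *m M = 1%:M -> y 0 j = \sum_(i < k) L j i * inner y (row i M).
Proof.
move=> LM; transitivity ((y *m (L *m M)^T) 0 j); first by rewrite LM trmx1 mulmx1.
rewrite trmx_mul mulmxA mxE; apply: eq_bigr => i _; rewrite mulrC -inner_mulmx_tr.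
by rewrite !mxE; congr (_ * _); apply: eq_bigr => l _; rewrite !mxE mulrC.
Qed.

Lemma max_inner_dominates_norm (I : finType) (i0 : I) k (e : 'I_k -> I) (u : I -> V) :
    \sum_o u o = 0 -> row_full (\matrix_(i < k) (u (e i) - u i0)) ->
  exists2 b, 0 < b & forall y, exists m, `|y| <= b * inner y (u m).
Proof.
(* The [<y, u o>] sum to zero, so the largest one bounds all of them, and the
   coordinates of [y] are combinations of their differences. *)
move=> u_sum0 /row_fullP [L LM].
pose N := #|I|%:R : R.
have N_gt0 : 0 < N by rewrite ltr0n; apply/card_gt0P; exists i0.
pose La := \sum_j \sum_i `|L j i|.
have La_ge0 : 0 <= La by apply: sumr_ge0 => j _; exact: sumr_ge0.
exists (2 * N * (La + 1)) => [|y]; first by rewrite !mulr_gt0 // ltr_wpDl.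
have sum0 : \sum_o inner y (u o) = 0 by rewrite -inner_sumr u_sum0 inner0r.
have [m c_le] := abs_le_card_max_of_sum0 i0 sum0; exists m.
set cm := inner y (u m) in c_le *.
have cm_ge0 : 0 <= cm by have := le_trans (normr_ge0 _) (c_le m); rewrite pmulr_rge0.
have coord_le j : `|y 0 j| <= La * (2 * N * cm).
  rewrite (coord_left_inverse y j LM); apply: le_trans (ler_norm_sum _ _ _) _.
  apply: le_trans (_ : \sum_i `|L j i| * (2 * N * cm) <= _).
    apply: ler_sum => i _; rewrite normrM ler_wpM2l // rowK innerBr.
    by apply: le_trans (ler_normB _ _) _; have := c_le (e i); have := c_le i0; lra.
  rewrite -mulr_suml ler_wpM2r ?mulr_ge0 ?(ltW N_gt0) //.
  by apply: ler_sum_term => j'; exact: sumr_ge0.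
have bound : La * (2 * N * cm) <= 2 * N * (La + 1) * cm.
  by rewrite mulrCA -mulrA ler_wpM2l ?mulr_ge0 ?(ltW N_gt0) //; nra.
apply: norm_le_coord => [|j]; last exact: le_trans (coord_le j) bound.
by apply: le_trans bound; rewrite !mulr_ge0 ?(ltW N_gt0).
Qed.

Lemma convex_coercive f k (p : 'I_k -> V) :
    (forall x, differentiable f x) -> convex_fun f ->
    row_full (\matrix_(i < k) (grad f (p i) - grad f 0)) ->
  exists q b K, 0 < b /\ forall y, `|y| <= b * (f y - inner y q + K).
Proof.
move=> df cvx full.
pose G o := grad f (oapp p 0 o).
pose q := #|{: option 'I_k}|%:R^-1 *: \sum_o G o.
have u_sum0 : \sum_o (G o - q) = 0.
  by rewrite sumrB sumr_const -scaler_nat /q scalerA mulfV ?scale1r ?subrr // pnatr_eq0 card_option.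
have full_u : row_full (\matrix_(i < k) ((G (Some i) - q) - (G None - q))).
  suff -> : \matrix_(i < k) ((G (Some i) - q) - (G None - q)) =
            \matrix_(i < k) (grad f (p i) - grad f 0) by [].
  by apply/matrixP => i j; rewrite !mxE; ring.
have [b b_gt0 dominate] := max_inner_dominates_norm u_sum0 full_u.
pose A o := f (oapp p 0 o) - inner (oapp p 0 o) (G o).
exists q, b, (\sum_o `|A o|); split=> // y.
have [m le_m] := dominate y; apply: le_trans le_m _; rewrite ler_wpM2l ?(ltW b_gt0) //.
have := convex_fun_grad_le y (df (oapp p 0 m)) cvx; have := ler_norm (- A m).
have := ler_sum_term (F := fun o => `|A o|) m (fun o => normr_ge0 _).
by rewrite innerBr innerBl normrN /A; lra.
Qed.

Lemma exists_local_min_sub_sq f b K : continuous f -> 0 < b ->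
    (forall y, `|y| <= b * (f y + K)) ->
  exists2 eps, 0 < eps &
    exists x, \forall y \near x, f x - eps * inner x x <= f y - eps * inner y y.
Proof.
move=> cf b_gt0 coer.
(* On the sphere of radius [rho] coercivity forces [f y >= |f 0| + 2], while
   [eps] keeps the penalty below [1] on the ball. *)
set rho := b * (`|K| + `|f 0| + 2).
have rho_gt0 : 0 < rho by rewrite mulr_gt0 // !ltr_wpDl.
set eps := (n%:R * rho ^+ 2 + 1)^-1.
have eps_gt0 : 0 < eps by rewrite invr_gt0 ltr_wpDl // mulr_ge0 ?sqr_ge0.
exists eps => //.
set psi := fun y => f y - eps * inner y y.
set A := [set y : V | `|y| <= rho].
have psi_cont : continuous psi.
  move=> y; apply: (continuousB (f := f) (g := fun y => eps * inner y y)); first exact: cf.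
  by apply: (continuousM (s := cst eps)); [exact: cst_continuous | exact: continuous_inner_self].
have A0 : A 0 by rewrite /A /= normr0 ltW.
have A_compact : compact A by exact: compact_norm_le.
have [xs] := EVT_min_rV (ex_intro A 0 A0) A_compact (continuous_subspaceT psi_cont).
rewrite inE => Axs xs_min.
have pen_lt1 y : A y -> eps * inner y y < 1.
  move=> Ay; rewrite /eps mulrC ltr_pdivrMr ?mul1r; last by rewrite ltr_wpDl // mulr_ge0 ?sqr_ge0.
  apply: le_lt_trans (inner_self_le y) _.
  have : `|y| ^+ 2 <= rho ^+ 2 by rewrite lerXn2r ?nnegrE ?(ltW rho_gt0).
  by move/(ler_wpM2l (ler0n R n)); lra.
have xs_interior : `|xs| < rho.
  rewrite lt_neqAle Axs andbT; apply/eqP => xs_rho.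
  have : `|f 0| + 2 <= f xs.
    have := coer xs; rewrite xs_rho /rho ler_pM2l //; have := ler_norm K; lra.
  have := xs_min 0 (mem_set A0); have := pen_lt1 xs Axs.
  rewrite /psi inner0r mulr0 subr0.
  have := ler_norm (f 0); lra.
have near_lt : \forall y \near xs, `|y| < rho.
  exact: cvgr_lt (@norm_continuous _ _ xs) _ xs_interior.
exists xs; apply: filterS near_lt => y y_lt; apply: xs_min.
by rewrite inE /A /= ltW.
Qed.

Lemma cvg_line x u : (fun t : R => x + t *: u) @ 0 --> x.
Proof.
rewrite [X in _ --> X](_ : x = (cst x + *:%R^~ u) 0); last by rewrite !fctE scale0r addr0.
exact: continuousD (@cst_continuous _ _ _ 0) (@scalel_continuous _ _ u 0).
Qed.

Lemma local_min_second_difference f q eps x w :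
    (\forall y \near x,
       f x - inner x q - eps * inner x x <= f y - inner y q - eps * inner y y) ->
  \forall t \near 0,
    2 * (eps * inner w w) * t ^+ 2 <= f (x + t *: w) + f (x + (- t) *: w) - 2 * f x.
Proof.
move=> x_min; have /= near_plus := @cvg_line x w _ x_min.
have /= near_minus := @cvg_line x (- w) _ x_min.
near=> t.
have le_plus : f x - inner x q - eps * inner x x <=
    f (x + t *: w) - inner (x + t *: w) q - eps * inner (x + t *: w) (x + t *: w).
  by near: t; exact: near_plus.
have le_minus : f x - inner x q - eps * inner x x <=
    f (x + (- t) *: w) - inner (x + (- t) *: w) q
      - eps * inner (x + (- t) *: w) (x + (- t) *: w).
  by rewrite scaleNr -scalerN; near: t; exact: near_minus.
have lin : inner (x + t *: w) q + inner (x + (- t) *: w) q = 2 * inner x q.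
  rewrite /inner -big_split mulr_sumr; apply: eq_bigr => j _ /=; rewrite !mxE; ring.
have quad : inner (x + t *: w) (x + t *: w) + inner (x + (- t) *: w) (x + (- t) *: w)
    = 2 * inner x x + 2 * t ^+ 2 * inner w w.
  rewrite /inner -big_split !mulr_sumr -big_split; apply: eq_bigr => j _ /=; rewrite !mxE; ring.
have := congr1 (fun z => eps * z) quad; lra.
Unshelve. all: by end_near.
Qed.

Lemma hessian_form_ge_of_local_min f q eps x w : C2 f -> 0 < eps -> w != 0 ->
    (\forall y \near x,
       f x - inner x q - eps * inner x x <= f y - inner y q - eps * inner y y) ->
  eps * inner w w <= inner w (w *m hessian f x).
Proof.
move=> C2f eps_gt0 w0 x_min; have [df [dpf _]] := C2f.
pose F y := inner w (grad f y).
have dk t : is_derive t (1 : R) (fun s => f (x + s *: w)) (F (x + t *: w)).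
  by rewrite /F -derive_inner_grad //; exact: is_derive_line.
have dD t : is_derive t (1 : R) (fun s => F (x + s *: w))
    (inner w (w *m hessian f (x + t *: w))).
  rewrite -grad_inner_grad // -derive_inner_grad; last exact: differentiable_inner_grad.
  by apply: is_derive_line; exact: differentiable_inner_grad.
have cD2 : {for 0, continuous (fun t : R => inner w (w *m hessian f (x + t *: w)))}.
  apply: (continuous_comp (f := fun t : R => x + t *: w)
    (g := fun y => inner w (w *m hessian f y))); last exact: continuous_inner_hessian.
  by move=> A /=; rewrite scale0r addr0; exact: cvg_line.
have c_gt0 : 0 < eps * inner w w by rewrite mulr_gt0 // inner_self_gt0.
have := le_derive2_of_second_difference dk dD c_gt0 cD2; rewrite /= scale0r addr0.
by apply; exact: local_min_second_difference x_min.
Qed.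

Lemma coercive_hessian_det_neq0 f q b K : C2 f -> 0 < b ->
    (forall y, `|y| <= b * (f y - inner y q + K)) ->
  exists x, \det (hessian f x) != 0.
Proof.
move=> C2f b_gt0 coer.
have cont : continuous (fun y => f y - inner y q).
  move=> y; apply: (continuousB (f := f) (g := fun y => inner y q)).
    exact/differentiable_continuous/C2f.1.
  exact: continuous_innerl.
have [eps eps_gt0 [x x_min]] := exists_local_min_sub_sq cont b_gt0 coer.
exists x; apply/negP => /det0P [w w0 wH].
have := hessian_form_ge_of_local_min C2f eps_gt0 w0 x_min.
by rewrite wH inner0r leNgt mulr_gt0 ?inner_self_gt0.
Qed.

Lemma hessian_mul_eq0_of_inner_grad_const f v c : C2 f ->
  (forall x, inner v (grad f x) = c) -> forall x, v *m hessian f x = 0.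
Proof.
move=> [_ [df _]] vc x; rewrite -grad_inner_grad //; apply/rowP => j.
rewrite !mxE /partial (_ : (fun y => inner v (grad f y)) = cst c) ?derive_cst //.
exact/funext.
Qed.

End RowCalculus.

Theorem proposition4p9 (R : realType) (n : nat) (phi : 'rV[R]_n -> R) :
  C2 phi -> convex_fun phi ->
  ((forall x : 'rV[R]_n, \det (hessian phi x) = 0) <->
   (exists (v : 'rV[R]_n) (c : R), v != 0 /\
      forall x : 'rV[R]_n, inner v (grad phi x) = c)).
Proof.
move=> C2phi cvx; split => [det0 | [v [c [v0 vc]]] x].
- have [[v v0 v_orth] | [k [p full]]] :=
    values_orthogonal_or_full (fun x => grad phi x - grad phi 0).
    exists v, (inner v (grad phi 0)); split => // x.
    by apply/eqP; rewrite -subr_eq0 -innerBr -inner_mulmx_tr v_orth mxE.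
  have [q [b [K [b_gt0 coer]]]] := convex_coercive C2phi.1 cvx full.
  have [x] := coercive_hessian_det_neq0 C2phi b_gt0 coer.
  by rewrite det0 eqxx.
- apply/eqP/det0P; exists v => //.
  exact: hessian_mul_eq0_of_inner_grad_const C2phi vc x.
Qed.
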